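(* Let $\mathbb{X},\mathbb{Y}$ be finite-dimensional real Banach spaces, $T\in\mathbb{L}(\mathbb{X},\mathbb{Y})$, and let $F$ be a face of $B_{\mathbb{X}}$ with $T(F)\neq\{0\}$. Then $T$ preserves parallel pairs contained in $F$ (i.e. $(Tx,Ty)$ is a parallel pair in $\mathbb{Y}$ for all $x,y\in F$) if and only if one of the following holds: (i) $\dim(\mathrm{span}\,T(F))=1$; (ii) there exists $u\in F$ such that $J(Tu)\subset J(Tv)$ for all $v\in F\setminus\ker T$.
   Context: A face of $B_{\mathbb{X}}$ is a nonempty convex subset $F\subset S_{\mathbb{X}}$ such that whenever $x_1,x_2\in S_{\mathbb{X}}$, $0<t<1$ and $(1-t)x_1+tx_2\in F$, then $x_1,x_2\in F$. For non-zero $y$, $J(y)=\{g\in S_{\mathbb{Y}^*}: g(y)=\|y\|\}$. $(x,y)$ is a parallel pair if $\|x+\lambda y\|=\|x\|+\|y\|$ for some scalar $\lambda$ with $|\lambda|=1$. *)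

From HB Require Import structures.
From mathcomp Require Import all_boot all_order all_algebra.
From mathcomp Require Import all_classical all_reals all_analysis.
Unset Printing Implicit Defensive.
Import Order.TTheory GRing.Theory Num.Theory.
Import numFieldNormedType.Exports.
Local Open Scope classical_set_scope.
Local Open Scope ring_scope.

Section Defs.
Context {R : realType}.

Definition finite_dim (X : normedModType R) : Prop :=
  exists (n : nat) (e : 'I_n -> X),
    forall x : X, exists c : 'I_n -> R, x = \sum_(i < n) c i *: e i.

Definition unit_sphere (X : normedModType R) : set X := [set x | `|x| = 1].

Definition convex_set (X : normedModType R) (F : set X) : Prop :=
  forall x y t, F x -> F y -> 0 <= t <= 1 -> F ((1 - t) *: x + t *: y).

Definition is_face (X : normedModType R) (F : set X) : Prop :=
  [/\ F !=set0, F `<=` unit_sphere X, @convex_set X F &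
    forall x1 x2 t, unit_sphere X x1 -> unit_sphere X x2 -> 0 < t < 1 ->
      F ((1 - t) *: x1 + t *: x2) -> F x1 /\ F x2].

Definition span_set (X : normedModType R) (S : set X) : set X :=
  [set x | exists (n : nat) (c : 'I_n -> R) (v : 'I_n -> X),
     (forall i, S (v i)) /\ x = \sum_(i < n) c i *: v i].

Definition span_dim1 (X : normedModType R) (S : set X) : Prop :=
  exists e : X, e != 0 /\ @span_set X S = [set a *: e | a in [set: R]].

Definition dual_norm (Y : normedModType R) (g : Y -> R) : R :=
  sup [set `|g z| | z in [set z : Y | `|z| <= 1]].

Definition dual_unit (Y : normedModType R) (g : Y -> R) : Prop :=
  [/\ (forall (a : R) (u v : Y), g (a *: u + v) = a * g u + g v),
      continuous g & @dual_norm Y g = 1].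

Definition Jset (Y : normedModType R) (y : Y) : set (Y -> R) :=
  [set g | @dual_unit Y g /\ g y = `|y|].

Definition parallel_pair (X : normedModType R) (x y : X) : Prop :=
  exists lambda : R, `|lambda| = 1 /\ `|x + lambda *: y| = `|x| + `|y|.

End Defs.
Arguments finite_dim {R}.
Arguments is_face {R X}.
Arguments span_dim1 {R X}.
Arguments Jset {R Y}.
Arguments parallel_pair {R X}.

From Pilot Require Import Defs.
From mathcomp Require Import all_boot all_order all_algebra.
From mathcomp Require Import all_classical all_reals all_analysis.
From mathcomp Require Import ring lra.
Import Order.TTheory GRing.Theory Num.Theory.
Import numFieldNormedType.Exports.
Local Open Scope classical_set_scope.
Local Open Scope ring_scope.

Section ParallelPairs.
Context {R : realType} {Y : normedModType R}.
Implicit Types (y z : Y) (a b : R).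

Definition norm_additive y z := `|y + z| = `|y| + `|z|.

Lemma parallel_pairP y z :
  parallel_pair y z <-> norm_additive y z \/ `|y - z| = `|y| + `|z|.
Proof.
split=> [[l [l1 h]]|[h|h]].
- have [l0|l0] := leP 0 l.
  + by left; move: h; rewrite -[l]ger0_norm // l1 scale1r.
  + by right; move: h; rewrite -[l]opprK -(ltr0_norm l0) l1 scaleN1r.
- by exists 1; rewrite normr1 scale1r.
- by exists (-1); rewrite normrN normr1 scaleN1r.
Qed.

Lemma norm_additiveC y z : norm_additive y z -> norm_additive z y.
Proof. by rewrite /norm_additive addrC => ->; rewrite addrC. Qed.

Lemma norm_additive0 z : norm_additive 0 z.
Proof. by rewrite /norm_additive add0r normr0 add0r. Qed.

Lemma norm_additive_scale y z a b : norm_additive y z -> 0 <= a -> 0 <= b ->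
  `|a *: y + b *: z| = a * `|y| + b * `|z|.
Proof.
wlog ba : y z a b / b <= a.
  move=> wlog_ba yz a0 b0; have [ba|ab] := leP b a; first exact: wlog_ba.
  rewrite addrC wlog_ba 1?addrC //; [exact: ltW | exact: norm_additiveC].
move=> yz a0 b0; apply/le_anti/andP; split.
  by rewrite (le_trans (ler_normD _ _)) // !normrZ !ger0_norm.
have := ler_normD (a *: y + b *: z) ((a - b) *: z).
have -> : a *: y + b *: z + (a - b) *: z = a *: (y + z).
  by rewrite scalerBl -addrA [b *: z + _]addrC subrK scalerDr.
rewrite !normrZ yz.
rewrite !ger0_norm ?subr_ge0 // mulrDr mulrBl; lra.
Qed.

Lemma parallel_pair_additive y z :
  parallel_pair y z -> `|y - z| < `|y| + `|z| -> norm_additive y z.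
Proof. by case/parallel_pairP=> // ->; rewrite ltxx. Qed.

Lemma pos_comb_neq0 y z a b : norm_additive y z -> y != 0 -> 0 < a -> 0 <= b ->
  a *: y + b *: z != 0.
Proof.
move=> yz y0 a0 b0; rewrite -normr_gt0 norm_additive_scale // ?(ltW a0) //.
have : 0 < a * `|y| by rewrite mulr_gt0 ?normr_gt0.
have : 0 <= b * `|z| by rewrite mulr_ge0.
lra.
Qed.

Lemma normr_add_mulr_ge0 (p q : R) : 0 <= p * q -> `|p + q| = `|p| + `|q|.
Proof.
move=> pq; have [p0|p0] := leP 0 p.
  have [q0|q0] := leP 0 q; first by rewrite !ger0_norm ?addr_ge0.
  have -> : p = 0 by nra.
  by rewrite normr0 !add0r.
have [q0|q0] := leP 0 q.
  have -> : q = 0 by nra.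
  by rewrite normr0 !addr0.
by rewrite !ltr0_norm ?opprD //; lra.
Qed.

Lemma parallel_pair_collinear (e : Y) a b : parallel_pair (a *: e) (b *: e).
Proof.
apply/parallel_pairP; have [ab|ab] := leP 0 (a * b).
  by left; rewrite /norm_additive -scalerDl !normrZ normr_add_mulr_ge0 // mulrDl.
right; rewrite -scalerBl !normrZ normr_add_mulr_ge0 ?normrN ?mulrDl //.
by rewrite mulrN; lra.
Qed.

End ParallelPairs.

Lemma subr_convex_comb (R : realType) (V : lmodType R) (y z : V) (t : R) :
  y - ((1 - t) *: y + t *: z) = t *: (y - z).
Proof.
by rewrite scalerBr scalerBl scale1r opprD opprB addrA addrCA subrr addr0.
Qed.

Section ConvexParallel.
Context {R : realType} {Y : normedModType R}.
Variable C : set Y.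
Hypothesis C_convex : Defs.convex_set Y C.
Hypothesis C_parallel : forall y z, C y -> C z -> parallel_pair y z.
Implicit Types (y z m w : Y).

Lemma convex_midpoint y z : C y -> C z -> C (2^-1 *: (y + z)).
Proof.
move=> Cy Cz; have half : 1 - 2^-1 = 2^-1 :> R by rewrite {1}(splitr 1) mul1r addrK.
have := C_convex _ _ (2^-1) Cy Cz; rewrite half scalerDr; apply.
by rewrite invr_ge0 ler0n invf_le1 ?ler1n // ltr0n.
Qed.

Lemma norm_midpoint_additive y z :
  norm_additive y z -> `|2^-1 *: (y + z)| = 2^-1 * (`|y| + `|z|).
Proof. by move=> yz; rewrite normrZ ger0_norm ?invr_ge0 ?ler0n // yz. Qed.

(* [m] splits [y - z] into pieces of lengths [|y|] and [|z|]; comparing the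
   midpoints of [[m, y]] and [[m, z]] forces [|m| = 0] unless [(y, z)] is
   norm-additive. *)
Lemma norm_additive_of_split_point y z m : C y -> C z -> C m -> m != 0 ->
  `|y - m| = `|y| -> `|z - m| = `|z| -> `|y - z| = `|y| + `|z| ->
  norm_additive y z.
Proof.
move=> Cy Cz Cm m0 ym zm yz_sub.
have m_pos : 0 < `|m| by rewrite normr_gt0.
have my : norm_additive m y.
  by apply/norm_additiveC/parallel_pair_additive; [exact: C_parallel | lra].
have mz : norm_additive m z.
  by apply/norm_additiveC/parallel_pair_additive; [exact: C_parallel | lra].
have half_pos : 0 < 2^-1 :> R by rewrite invr_gt0 ltr0n.
have /parallel_pairP[mid_add|mid_sub] :=
  C_parallel _ _ (convex_midpoint _ _ Cm Cy) (convex_midpoint _ _ Cm Cz).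
- move: mid_add; rewrite /norm_additive !norm_midpoint_additive // -scalerDr.
  rewrite normrZ ger0_norm ?(ltW half_pos) // => mid_add.
  rewrite /norm_additive; apply/le_anti/andP; split; first exact: ler_normD.
  have := ler_normD (y + z) (m + m); have := ler_normD m m.
  have <- : m + y + (m + z) = (y + z) + (m + m).
    by rewrite addrACA addrC addrACA [y + _]addrC.
  nra.
- move: mid_sub; rewrite !norm_midpoint_additive // -scalerBr.
  rewrite [m + y]addrC addrKA normrZ ger0_norm ?(ltW half_pos) // yz_sub.
  nra.
Qed.

Lemma nonadditive_opposite y z : C y -> C z -> ~ norm_additive y z ->
  y != 0 /\ exists2 k, 0 < k & z = - (k *: y).
Proof.
move=> Cy Cz yz.
have yz_sub : `|y - z| = `|y| + `|z|.
  by have /parallel_pairP[] := C_parallel _ _ Cy Cz.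
have y0 : y != 0.
  by apply/negP => /eqP y0; apply: yz; rewrite y0; exact: norm_additive0.
have z0 : z != 0.
  by apply/negP => /eqP z0; apply: yz; rewrite z0 /norm_additive addr0 normr0 addr0.
have ny : 0 < `|y| by rewrite normr_gt0.
have nz : 0 < `|z| by rewrite normr_gt0.
pose t := `|y| / (`|y| + `|z|).
have t0 : 0 < t by rewrite divr_gt0 // addr_gt0.
have t1 : t < 1 by rewrite ltr_pdivrMr ?addr_gt0 // mul1r ltrDl.
have td : t * (`|y| + `|z|) = `|y| by rewrite mulfVK // gt_eqF ?addr_gt0.
(* the point of the segment [[y, z]] at distance [|y|] from [y] *)
pose m := (1 - t) *: y + t *: z.
split=> //; have [m0|m0] := eqVneq m 0.
  exists ((1 - t) / t); first by rewrite divr_gt0 // subr_gt0.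
  apply: (scalerI (lt0r_neq0 t0)); rewrite scalerN scalerA mulrC divfK ?gt_eqF //.
  by apply/eqP; rewrite -subr_eq0 opprK addrC; apply/eqP.
exfalso; apply: yz; apply: (@norm_additive_of_split_point y z m) => //.
- by apply: C_convex; rewrite ?ltW.
- by rewrite subr_convex_comb normrZ ger0_norm ?ltW // yz_sub.
- have -> : m = (1 - (1 - t)) *: z + (1 - t) *: y by rewrite subKr addrC.
  rewrite subr_convex_comb normrZ ger0_norm ?subr_ge0 ?ltW // distrC yz_sub.
  by rewrite mulrBl mul1r td addrAC subrr add0r.
Qed.

Lemma convex_parallel_additive :
  (forall y, C y -> y != 0 -> exists2 w, C w & forall a, w != a *: y) ->
  forall y z, C y -> C z -> norm_additive y z.
Proof.
(* Otherwise [z = - k y], and a point [w] off the line through [y] is additive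
   with both [y] and [z]; then the midpoints of [[y, w]] and [[z, w]] are
   neither additive nor opposite. *)
move=> off_line y z Cy Cz; apply: contrapT => yz.
have [y0 [k k0 ez]] := nonadditive_opposite _ _ Cy Cz yz.
have [w Cw w_off] := off_line y Cy y0.
have additive_w v : C v -> (forall l, w != - (l *: v)) -> norm_additive v w.
  move=> Cv v_off; apply: contrapT => vw.
  have [_ [l _ ew]] := nonadditive_opposite _ _ Cv Cw vw.
  by move: (v_off l); rewrite ew eqxx.
have yw : norm_additive y w by apply: additive_w => // l; rewrite -scaleNr.
have zw : norm_additive z w.
  by apply: additive_w => // l; rewrite ez scalerN opprK scalerA.
have half_pos : 0 < 2^-1 :> R by rewrite invr_gt0 ltr0n.
have Cp := convex_midpoint _ _ Cy Cw; have Cq := convex_midpoint _ _ Cz Cw.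
have [pq|pq] := pselect (norm_additive (2^-1 *: (y + w)) (2^-1 *: (z + w))).
  move: pq; rewrite /norm_additive !norm_midpoint_additive // -scalerDr normrZ.
  have -> : y + w + (z + w) = (1 - k) *: y + (w + w).
    by rewrite ez addrACA scalerBl scale1r.
  have nz : `|z| = k * `|y| by rewrite ez normrN normrZ gtr0_norm.
  have ny : 0 < `|y| by rewrite normr_gt0.
  have := ler_normD ((1 - k) *: y) (w + w); rewrite normrZ.
  have := ler_normD w w.
  have : `|1 - k| < 1 + k by rewrite ltr_norml; apply/andP; split; lra.
  rewrite nz (ger0_norm (ltW half_pos)); nra.
have [_ [l l0 e]] := nonadditive_opposite _ _ Cp Cq pq.
have l1 : 1 + l != 0 by rewrite gt_eqF // addr_gt0.
apply: (negP (w_off ((k - l) / (1 + l)))); apply/eqP.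
apply: (scalerI l1); rewrite scalerA mulrC divfK //.
move: e; rewrite scalerA mulrC -scalerA -scalerN => /(scalerI (lt0r_neq0 half_pos)).
rewrite ez addrC => /eqP; rewrite subr_eq => /eqP e.
by rewrite scalerDl scale1r scalerBl {1}e scalerDr opprD addrAC subrK addrC.
Qed.

End ConvexParallel.

Section LinearFunctionals.
Context {R : realType} {Y : normedModType R}.
Implicit Types (g : Y -> R) (y z : Y) (a b : R).

Definition linear_functional g := forall a y z, g (a *: y + z) = a * g y + g z.

Lemma linear_functional0 {g} : linear_functional g -> g 0 = 0.
Proof. by move=> lin; have := lin 1 0 0; rewrite scaler0 addr0 mul1r; lra. Qed.

Lemma linear_functionalZ {g} :
  linear_functional g -> forall a y, g (a *: y) = a * g y.
Proof.
by move=> lin a y; have := lin a y 0; rewrite addr0 linear_functional0 // addr0.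
Qed.

Lemma linear_functionalD {g} :
  linear_functional g -> forall y z, g (y + z) = g y + g z.
Proof. by move=> lin y z; have := lin 1 y z; rewrite scale1r mul1r. Qed.

Lemma linear_functionalN {g} : linear_functional g -> forall y, g (- y) = - g y.
Proof. by move=> lin y; rewrite -scaleN1r linear_functionalZ // mulN1r. Qed.

(* Continuity bounds [g] near [0], so the supremum defining [dual_norm g] is
   that of a bounded set and really dominates every [|g z|] with [|z| <= 1]. *)
Lemma dual_unit_le_norm {g} : dual_unit Y g -> forall z, `|g z| <= `|z|.
Proof.
case=> lin g_cont g_norm.
have : \forall z \near (0 : Y), `|g 0 - g z| < 1.
  by have /cvgrPdist_lt := g_cont 0; apply; exact: ltr01.
case/nbhs_normP => d /= d0 near0.
have g0 := linear_functional0 lin.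
have d2 : 0 < d / 2 by rewrite divr_gt0.
pose S := [set `|g z| | z in [set z : Y | `|z| <= 1]].
have S_ub : ubound S (d / 2)^-1.
  move=> _ [z /= z1 <-].
  have : `|g 0 - g ((d / 2) *: z)| < 1.
    apply: near0; rewrite /ball_ /= sub0r normrN normrZ gtr0_norm //.
    apply: (le_lt_trans (y := d / 2)); first by rewrite ler_piMr // ltW.
    by rewrite ltr_pdivrMr // ltr_pMr // ltr1n.
  rewrite g0 sub0r normrN linear_functionalZ // normrM gtr0_norm //.
  by rewrite -ltr_pdivlMl // mulr1 => /ltW.
move=> z; have [->|z0] := eqVneq z 0; first by rewrite g0 !normr0.
have nz : 0 < `|z| by rewrite normr_gt0.
have : S `|g (`|z|^-1 *: z)|.
  exists (`|z|^-1 *: z) => //.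
  by rewrite /= normrZ ger0_norm ?invr_ge0 ?(ltW nz) // mulVf ?gt_eqF.
move/(ub_le_sup (ex_intro _ _ S_ub)); rewrite -/(dual_norm Y g) g_norm.
rewrite linear_functionalZ // normrM ger0_norm ?invr_ge0 ?(ltW nz) //.
by rewrite ler_pdivrMl // mulr1.
Qed.

Lemma Jset_of_norming g y : linear_functional g -> (forall z, `|g z| <= `|z|) ->
  y != 0 -> g y = `|y| -> Jset y g.
Proof.
move=> lin g_le y0 gy; split=> //; split=> //.
- move=> x; apply/cvgrPdist_lt => e e0; apply/nbhs_normP; exists e => //= z xz.
  have -> : g x - g z = g (x - z).
    by rewrite linear_functionalD // linear_functionalN.
  exact: le_lt_trans (g_le _) xz.
- have ny : 0 < `|y| by rewrite normr_gt0.
  rewrite /dual_norm; apply/le_anti/andP; split.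
    apply: ge_sup; first by exists `|g 0|, 0 => //=; rewrite normr0.
    by move=> _ [z /= z1 <-]; exact: le_trans (g_le _) z1.
  apply: ub_le_sup.
    by exists 1 => _ [z /= z1 <-]; exact: le_trans (g_le _) z1.
  exists (`|y|^-1 *: y).
    by rewrite /= normrZ ger0_norm ?invr_ge0 ?(ltW ny) // mulVf ?gt_eqF.
  by rewrite linear_functionalZ // gy mulVf ?normr1 ?gt_eqF.
Qed.

Lemma Jset0 g : dual_unit Y g -> Jset 0 g.
Proof.
by move=> g_unit; split=> //; rewrite normr0 linear_functional0 //; case: g_unit.
Qed.

Lemma parallel_pair_of_Jset g y z : Jset y g -> Jset z g -> parallel_pair y z.
Proof.
move=> [g_unit gy] [_ gz]; have [lin _ _] := g_unit.
apply/parallel_pairP; left; apply/le_anti/andP; split; first exact: ler_normD.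
rewrite -gy -gz -(linear_functionalD lin).
exact: le_trans (ler_norm _) (dual_unit_le_norm g_unit _).
Qed.

(* [g] can lose nothing against the norm on either summand. *)
Lemma Jset_pos_comb_sub y z a b : norm_additive y z -> 0 < a -> 0 <= b ->
  Jset (a *: y + b *: z) `<=` Jset y.
Proof.
move=> yz a0 b0 g [g_unit g_comb]; split=> //; have [lin _ _] := g_unit.
have g_le u : g u <= `|u|.
  exact: le_trans (ler_norm _) (dual_unit_le_norm g_unit _).
move: g_comb; rewrite (linear_functionalD lin) !(linear_functionalZ lin).
rewrite norm_additive_scale ?(ltW a0) // => g_comb.
apply/le_anti; rewrite g_le /=.
have := g_le y; have := g_le z; nra.
Qed.

End LinearFunctionals.

Section NormingFunctional.
Context {R : realType} {Y : normedModType R}.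
Implicit Types (S : set Y) (phi : Y -> R) (w x z : Y).

Definition linear_subspace S :=
  S 0 /\ forall (a : R) u v, S u -> S v -> S (a *: u + v).

Definition norm_dominated S phi :=
  (forall (a : R) u v, S u -> S v -> phi (a *: u + v) = a * phi u + phi v) /\
  (forall u, S u -> phi u <= `|u|).

Definition add_line S w := [set z | exists x (t : R), S x /\ z = x + t *: w].

Lemma norm_dominated_sub S S' phi : S' `<=` S -> norm_dominated S phi ->
  norm_dominated S' phi.
Proof.
move=> S'S [lin le].
by split=> [a u v Su Sv|u Su]; [apply: lin | apply: le]; apply: S'S.
Qed.

Lemma linear_subspace_add_line S w :
  linear_subspace S -> linear_subspace (add_line S w).
Proof.
case=> S0 S_lin; split; first by exists 0, 0; rewrite scale0r addr0.
move=> a _ _ [x [t [Sx ->]]] [x' [t' [Sx' ->]]].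
exists (a *: x + x'), (a * t + t'); split; first exact: S_lin.
by rewrite scalerDr scalerA addrACA -scalerDl.
Qed.

Lemma add_line_decomp_uniq {S w x t x' t'} :
  linear_subspace S -> ~ S w -> S x -> S x' ->
  x + t *: w = x' + t' *: w -> x = x' /\ t = t'.
Proof.
case=> S0 S_lin Sw Sx Sx' e.
have e' : (t - t') *: w = x' - x.
  by apply/eqP; rewrite scalerBl subr_eq addrAC -e addrC addKr.
have t_eq : t = t'.
  apply/eqP; rewrite -subr_eq0; apply/negPn/negP => tt'; apply: Sw.
  rewrite -(scalerK tt' w) e' -[_ *: _]addr0; apply: (S_lin) => //.
  by rewrite addrC -scaleN1r; exact: S_lin.
by split=> //; move: e; rewrite t_eq => /addIr.
Qed.

(* The value of [extend_by S phi w c] off [add_line S w] is junk. *)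
Definition extend_by S phi w (c : R) z : R :=
  match pselect (exists xt : Y * R, S xt.1 /\ z = xt.1 + xt.2 *: w) with
  | left H => let xt := proj1_sig (cid H) in phi xt.1 + xt.2 * c
  | right _ => 0
  end.

Lemma extend_byE S phi w c x t : linear_subspace S -> ~ S w -> S x ->
  extend_by S phi w c (x + t *: w) = phi x + t * c.
Proof.
move=> S_sub Sw Sx; rewrite /extend_by; case: pselect => [H|H]; last first.
  by exfalso; apply: H; exists (x, t).
case: (cid H) => -[x' t'] /= [Sx' e].
by have [-> ->] := add_line_decomp_uniq S_sub Sw Sx Sx' e.
Qed.

Lemma norm_dominated_extend_by S phi w c : linear_subspace S -> ~ S w ->
  norm_dominated S phi ->
  (forall x, S x -> phi x - `|x - w| <= c <= `|x + w| - phi x) ->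
  norm_dominated (add_line S w) (extend_by S phi w c).
Proof.
move=> S_sub Sw [lin le] c_bnd; have [S0 S_lin] := S_sub.
have phi0 : phi 0 = 0 by have := lin 1 0 0 S0 S0; rewrite scaler0 addr0 mul1r; lra.
have SZ a x : S x -> S (a *: x) by move=> Sx; rewrite -[_ *: x]addr0; exact: S_lin.
have phiZ a x : S x -> phi (a *: x) = a * phi x.
  by move=> Sx; have := lin a x 0 Sx S0; rewrite !addr0 phi0 addr0.
split.
- move=> a _ _ [x [t [Sx ->]]] [x' [t' [Sx' ->]]].
  have -> : a *: (x + t *: w) + (x' + t' *: w) = (a *: x + x') + (a * t + t') *: w.
    by rewrite scalerDr scalerA addrACA -scalerDl.
  rewrite !extend_byE ?lin //; [ring | exact: S_lin].
- move=> _ [x [t [Sx ->]]]; rewrite extend_byE //.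
  have [t_neg|t_pos|->] := ltgtP t 0; last first.
  + by rewrite mul0r addr0 scale0r addr0; exact: le.
  + have /andP[_] := c_bnd _ (SZ t^-1 _ Sx); rewrite phiZ //.
    have -> : t^-1 *: x + w = t^-1 *: (x + t *: w).
      by rewrite scalerDr scalerA mulVf ?scale1r ?gt_eqF.
    rewrite normrZ gtr0_norm ?invr_gt0 // -mulrBr ler_pdivlMl //; lra.
  + have s_pos : 0 < - t by rewrite oppr_gt0.
    have /andP[+ _] := c_bnd _ (SZ (- t)^-1 _ Sx); rewrite phiZ //.
    have -> : (- t)^-1 *: x - w = (- t)^-1 *: (x + t *: w).
      rewrite scalerDr scalerA invrN mulNr mulVf ?lt_eqF //.
      by rewrite scaleN1r.
    rewrite normrZ gtr0_norm ?invr_gt0 // -mulrBr ler_pdivrMl //; lra.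
Qed.

Lemma dominated_extension S phi w : linear_subspace S -> norm_dominated S phi ->
  exists psi, norm_dominated (add_line S w) psi /\ forall x, S x -> psi x = phi x.
Proof.
move=> S_sub phi_dom; have [S0 S_lin] := S_sub; have [lin le] := phi_dom.
have [Sw|Sw] := pselect (S w).
  exists phi; split=> //; apply: norm_dominated_sub phi_dom => _ [x [t [Sx ->]]].
  by rewrite addrC; exact: S_lin.
pose A := [set phi x - `|x - w| | x in S].
(* phi x + phi x' = phi (x + x') <= |x + x'| <= |x - w| + |x' + w| *)
have A_le x x' : S x -> S x' -> phi x - `|x - w| <= `|x' + w| - phi x'.
  move=> Sx Sx'; have := le _ (S_lin 1 x x' Sx Sx').
  rewrite lin // scale1r mul1r.
  have := ler_normD (x - w) (x' + w); rewrite addrACA addNr addr0; lra.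
have A_ub : ubound A (`|0 + w| - phi 0) by move=> _ [x Sx <-]; exact: A_le.
exists (extend_by S phi w (sup A)); split.
  apply: norm_dominated_extend_by => // x Sx; apply/andP; split.
    by apply: ub_le_sup; [exists (`|0 + w| - phi 0) | exists x].
  apply: ge_sup; first by exists (phi 0 - `|0 - w|), 0.
  by move=> _ [x' Sx' <-]; exact: A_le.
move=> x Sx; have := extend_byE S phi w (sup A) x 0 S_sub Sw Sx.
by rewrite scale0r addr0 mul0r addr0.
Qed.

Fixpoint add_lines S (s : seq Y) : set Y :=
  if s is w :: s' then add_line (add_lines S s') w else S.

Lemma linear_subspace_add_lines S s :
  linear_subspace S -> linear_subspace (add_lines S s).
Proof. by move=> S_sub; elim: s => //= w s; exact: linear_subspace_add_line. Qed.

Lemma sub_add_lines S s : S `<=` add_lines S s.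
Proof.
elim: s => //= w s IH x Sx; exists x, 0; split; first exact: IH.
by rewrite scale0r addr0.
Qed.

Lemma add_lines_sum S (I : Type) (e : I -> Y) (c : I -> R) (r : seq I) : S 0 ->
  add_lines S (map e r) (\sum_(i <- r) c i *: e i).
Proof.
move=> S0; elim: r => [|i r IH] /=; first by rewrite big_nil.
by rewrite big_cons addrC; exists (\sum_(j <- r) c j *: e j), (c i).
Qed.

Lemma dominated_extension_lines S phi s :
  linear_subspace S -> norm_dominated S phi ->
  exists psi, norm_dominated (add_lines S s) psi /\ forall x, S x -> psi x = phi x.
Proof.
move=> S_sub phi_dom.
elim: s => [|w s [psi [psi_dom psi_phi]]] /=; first by exists phi.
have [chi [chi_dom chi_psi]] :=
  dominated_extension _ _ w (linear_subspace_add_lines _ s S_sub) psi_dom.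
by exists chi; split=> // x Sx; rewrite chi_psi ?psi_phi //; exact: sub_add_lines.
Qed.

(* Hahn-Banach: extend [t y |-> t |y|] one basis vector at a time. *)
Lemma norming_functional (y : Y) : finite_dim Y -> y != 0 -> exists g, Jset y g.
Proof.
move=> [n [e e_span]] y0.
have zero_sub : linear_subspace [set 0].
  by split=> // a _ _ -> ->; rewrite scaler0 addr0.
have y_notin0 : ~ [set 0] y by move=> /eqP; rewrite (negbTE y0).
pose phi := extend_by [set 0] (fun=> 0) y `|y|.
have phi_dom : norm_dominated (add_line [set 0] y) phi.
  apply: norm_dominated_extend_by => //.
    by split=> [a u v _ _|u _]; rewrite ?mulr0 ?addr0.
  move=> _ ->; rewrite /= sub0r !add0r normrN subr0 lexx andbT.
  by have := normr_ge0 y; lra.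
have [g [[lin le] g_phi]] := dominated_extension_lines _ _ (map e (index_enum 'I_n))
  (linear_subspace_add_line _ y zero_sub) phi_dom.
have all_in z : add_lines (add_line [set 0] y) (map e (index_enum 'I_n)) z.
  have [c ->] := e_span z; apply: add_lines_sum.
  by exists 0, 0; rewrite scale0r addr0.
have g_lin : linear_functional g by move=> a u v; exact: lin.
exists g; apply: Jset_of_norming => //.
  move=> z; rewrite ler_norml le // andbT.
  by have := le (- z) (all_in _); rewrite linear_functionalN // normrN; lra.
rewrite g_phi; last by exists 0, 1; rewrite scale1r add0r.
have := extend_byE [set 0] (fun=> 0) y `|y| 0 1 zero_sub y_notin0 erefl.
by rewrite add0r scale1r mul1r add0r.
Qed.

Lemma parallel_of_common_Jset S (u : Y) : finite_dim Y -> u != 0 ->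
  (forall v, S v -> v != 0 -> Jset u `<=` Jset v) ->
  forall y z, S y -> S z -> parallel_pair y z.
Proof.
move=> Y_dim u0 uJ y z Sy Sz; have [g Jg] := norming_functional u Y_dim u0.
have SJ v : S v -> Jset v g.
  move=> Sv; have [->|v0] := eqVneq v 0; last exact: uJ.
  by apply: Jset0; case: Jg.
exact: parallel_pair_of_Jset (SJ _ Sy) (SJ _ Sz).
Qed.

End NormingFunctional.

Section FiniteSpanning.
Context {R : realType} {Y : normedModType R}.
Variables (n : nat) (e : 'I_n -> Y).
Hypothesis e_span : forall z : Y, exists c : 'I_n -> R, z = \sum_(i < n) c i *: e i.

Definition row_comb (c : 'rV[R]_n) : Y := \sum_i c 0 i *: e i.

Lemma row_comb_sum k (a : 'I_k -> R) (r : 'I_k -> 'rV[R]_n) :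
  row_comb (\sum_j a j *: r j) = \sum_j a j *: row_comb (r j).
Proof.
rewrite /row_comb; under eq_bigr => i _ do rewrite summxE scaler_suml.
rewrite exchange_big /=; apply: eq_bigr => j _; rewrite scaler_sumr.
by apply: eq_bigr => i _; rewrite mxE scalerA.
Qed.

Lemma row_comb_onto z : exists c, z = row_comb c.
Proof.
have [c ->] := e_span z; exists (\row_i c i).
by apply: eq_bigr => i _; rewrite mxE.
Qed.

(* A family in [C] whose coordinate matrix has maximal rank spans [C]. *)
Lemma finite_spanning_family (C : set Y) : C !=set0 ->
  exists k (y : 'I_k.+1 -> Y), (forall j, C (y j)) /\
    forall v, C v -> exists a : 'I_k.+1 -> R, v = \sum_j a j *: y j.
Proof.
case=> v0 Cv0.
pose P (r : nat) := `[< exists k (y : 'I_k.+1 -> Y) (M : 'M[R]_(k.+1, n)),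
   (forall j, C (y j) /\ y j = row_comb (row j M)) /\ \rank M = r >].
have [c0 v0_c0] := row_comb_onto v0.
have P0 : P (\rank c0).
  apply/asboolP; exists 0%N, (fun=> v0), c0.
  by split=> // j; rewrite (ord1 j) row_id.
have P_le r : P r -> (r <= n)%N.
  by move=> /asboolP[k [y [M [_ <-]]]]; exact: rank_leq_col.
have [r /asboolP[k [y [M [yM rM]]]] r_max] :=
  ex_maxnP (ex_intro _ (\rank c0) P0) P_le.
exists k, y; split=> [j|v]; first by have [] := yM j.
have [c -> Cc] := row_comb_onto v.
have /submxP[D ->] : (c <= M)%MS.
  apply/negPn/negP => cM.
  pose y' (j : 'I_(k.+1 + 1)) :=
    if fintype.split j is inl j' then y j' else row_comb c.
  have y'M j : C (y' j) /\ y' j = row_comb (row j (col_mx M c)).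
    rewrite -(splitK j); case: (fintype.split j) => j'; rewrite /y' unsplitK /=.
      by rewrite rowKu; exact: yM.
    by rewrite rowKd (ord1 j') row_id.
  have /r_max : P (\rank (col_mx M c)).
    by apply/asboolP; exists (k + 1)%N, y', (col_mx M c).
  have : (M < col_mx M c)%MS.
    by rewrite ltmxE -addsmxE addsmxSl col_mx_sub submx_refl.
  by rewrite ltmxErank -rM => /andP[_ /leq_trans lt_rank /lt_rank]; rewrite ltnn.
exists (fun j => D 0 j); rewrite mulmx_sum_row row_comb_sum; apply: eq_bigr => j _.
by have [_ ->] := yM j.
Qed.

End FiniteSpanning.

Lemma convex_comb {R : realType} {Y : normedModType R} (C : set Y) :
  Defs.convex_set Y C -> forall k (y : 'I_k -> Y) (lam : 'I_k -> R),
  (forall j, C (y j)) -> (forall j, 0 <= lam j) -> \sum_j lam j = 1 ->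
  C (\sum_j lam j *: y j).
Proof.
move=> C_convex; elim=> [|k IH] y lam Cy lam_ge0.
  by rewrite big_ord0 => /eqP; rewrite eq_sym oner_eq0.
rewrite !big_ord_recr /=.
set La := \sum_(j < k) lam (widen_ord (leqnSn k) j) => lam_sum.
have La_ge0 : 0 <= La by apply: sumr_ge0.
have [La0|La_neq0] := eqVneq La 0.
  have lam0 := psumr_eq0P (fun i _ => lam_ge0 (widen_ord (leqnSn k) i)) La0.
  rewrite big1 ?add0r; last by move=> j _; rewrite lam0 // scale0r.
  by move: lam_sum; rewrite La0 add0r => ->; rewrite scale1r.
have := IH (fun j => y (widen_ord (leqnSn k) j))
  (fun j => lam (widen_ord (leqnSn k) j) / La) (fun j => Cy _)
  (fun j => divr_ge0 (lam_ge0 _) La_ge0).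
rewrite -mulr_suml mulfV // => /(_ erefl) C_first.
have := C_convex _ _ (lam ord_max) C_first (Cy ord_max).
have -> : 1 - lam ord_max = La by rewrite -lam_sum addrK.
rewrite lam_ge0 /= -lam_sum lerDr La_ge0 => /(_ isT).
rewrite scaler_sumr; congr (C (_ + _)); apply: eq_bigr => j _.
by rewrite scalerA mulrC divfK.
Qed.

(* Take [u] the barycenter of a spanning family [y_j] of [C], and write
   [v = \sum_j a_j y_j]. For small [s > 0] the coefficients of
   [(1 + s) u - s v] in the [y_j] are positive, so up to normalisation this is
   a point [f] of [C], and [u] lies strictly between [v] and [f]. *)
Lemma convex_relative_interior {R : realType} {Y : normedModType R} {C : set Y} :
  finite_dim Y -> Defs.convex_set Y C -> C !=set0 ->
  exists2 u, C u & forall v, C v -> exists f (a b : R),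
    [/\ C f, 0 < a, 0 < b & u = a *: v + b *: f].
Proof.
move=> [n [e e_span]] C_convex C_ne.
have [k [y [Cy y_span]]] := finite_spanning_family _ _ e_span C C_ne.
pose K := k.+1%:R : R.
have K0 : 0 < K by rewrite ltr0n.
have sumK : \sum_(j < k.+1) K^-1 = 1.
  by rewrite sumr_const card_ord -mulr_natr mulVf ?gt_eqF.
exists (\sum_j K^-1 *: y j).
  by apply: convex_comb => // j; rewrite invr_ge0 ltW.
move=> v Cv; have [a ->] := y_span v Cv.
pose S := \sum_j `|a j|.
have a_le j : a j <= S.
  rewrite (le_trans (ler_norm _)) // /S (bigD1 j) //= lerDl; exact: sumr_ge0.
have S_ge0 : 0 <= S by apply: sumr_ge0.
have KS_pos : 0 < 1 + K * S by rewrite ltr_wpDr // mulr_ge0 // ltW.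
pose s := (1 + K * S)^-1.
have s_pos : 0 < s by rewrite invr_gt0.
have sKS : s * (1 + K * S) = 1 by rewrite mulVf ?gt_eqF.
pose beta j := (1 + s) / K - s * a j.
have beta_pos j : 0 < beta j.
  rewrite subr_gt0 ltr_pdivlMr //.
  have : s * a j * K <= s * S * K.
    by rewrite ler_wpM2r ?ler_wpM2l ?(ltW K0) ?(ltW s_pos).
  have : s * S * K = 1 - s by rewrite -sKS; ring.
  lra.
pose sigma := \sum_j beta j.
have sigma_pos : 0 < sigma.
  rewrite /sigma (bigD1 ord0) //= ltr_pwDl //; apply: sumr_ge0 => i _.
  exact: ltW.
exists (\sum_j (beta j / sigma) *: y j), (s / (1 + s)), (sigma / (1 + s)); split.
- apply: convex_comb => // [j|]; first by rewrite divr_ge0 ?ltW.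
  by rewrite -mulr_suml mulfV ?gt_eqF.
- by rewrite divr_gt0 // addr_gt0.
- by rewrite divr_gt0 // addr_gt0.
rewrite !scaler_sumr -big_split; apply: eq_bigr => j _ /=.
rewrite !scalerA -scalerDl; congr (_ *: _).
by rewrite /beta; field; rewrite !gt_eqF // addr_gt0.
Qed.

Section Lines.
Context {R : realType} {Y : normedModType R}.
Implicit Types (S : set Y) (y z w : Y).

Lemma parallel_of_span_dim1 S y z : span_dim1 S -> S y -> S z -> parallel_pair y z.
Proof.
move=> [e [_ span_e]].
have S_line w : S w -> exists a, w = a *: e.
  move=> Sw; have : span_set Y S w.
    by exists 1%N, (fun=> 1), (fun=> w); rewrite big_ord1 scale1r.
  by rewrite span_e => -[a _ <-]; exists a.
by move=> /S_line[a ->] /S_line[b ->]; exact: parallel_pair_collinear.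
Qed.

Lemma off_line_of_not_span_dim1 S y : ~ span_dim1 S -> S y -> y != 0 ->
  exists2 w, S w & forall a : R, w != a *: y.
Proof.
move=> S_dim Sy y0; apply: contrapT => on_line; apply: S_dim; exists y; split=> //.
have S_line w : S w -> exists a, w = a *: y.
  move=> Sw; apply: contrapT => w_off; apply: on_line; exists w => // a.
  by apply/eqP => e; apply: w_off; exists a.
apply/seteqP; split=> [_ [m [c [v [Sv ->]]]]|_ [a _ <-]].
- have [a ->] : exists a, \sum_(i < m) c i *: v i = a *: y.
    apply: (big_ind (fun z => exists a, z = a *: y)).
    + by exists 0; rewrite scale0r.
    + by move=> _ _ [a ->] [b ->]; exists (a + b); rewrite scalerDl.
    + move=> i _; have [a ->] := S_line _ (Sv i).
      by exists (c i * a); rewrite scalerA.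
  by exists a.
- by exists 1%N, (fun=> a), (fun=> y); rewrite big_ord1.
Qed.

End Lines.

Lemma convex_parallel_Jset_sub {R : realType} {Y : normedModType R} (C : set Y) :
  finite_dim Y -> Defs.convex_set Y C ->
  (forall y z, C y -> C z -> parallel_pair y z) -> ~ span_dim1 C ->
  (exists2 y, C y & y != 0) ->
  exists u, [/\ C u, u != 0 & forall v, C v -> Jset u `<=` Jset v].
Proof.
move=> Y_dim C_convex C_par C_dim [y Cy y0].
have C_add := convex_parallel_additive C C_convex C_par
  (fun w => off_line_of_not_span_dim1 C w C_dim).
have [u Cu u_int] := convex_relative_interior Y_dim C_convex (ex_intro _ _ Cy).
exists u; split=> // [|v Cv].
  have [f [a [b [Cf a0 b0 ->]]]] := u_int _ Cy.
  by apply: pos_comb_neq0 => //; [exact: C_add | exact: ltW].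
have [f [a [b [Cf a0 b0 ->]]]] := u_int _ Cv.
by apply: Jset_pos_comb_sub => //; [exact: C_add | exact: ltW].
Qed.

Lemma convex_linear_image {R : realType} {X Y : normedModType R}
    (T : {linear X -> Y}) {F : set X} :
  Defs.convex_set X F -> Defs.convex_set Y (T @` F).
Proof.
move=> F_convex _ _ t [x Fx <-] [x' Fx' <-] t01.
by exists ((1 - t) *: x + t *: x'); [exact: F_convex | rewrite linearD !linearZ].
Qed.

Theorem mainTheorem11 (R : realType) (X Y : completeNormedModType R)
  (T : {linear X -> Y}) (F : set X) :
  finite_dim X -> finite_dim Y -> continuous T ->
  is_face F -> (exists2 x, F x & T x != 0) ->
  ((forall x y, F x -> F y -> parallel_pair (T x) (T y)) <->
   (span_dim1 (T @` F) \/
    exists u, [/\ F u, T u != 0 &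
      forall v, F v -> T v != 0 -> Jset (T u) `<=` Jset (T v)])).
Proof.
move=> _ Y_dim _ [_ _ F_convex _] [x0 Fx0 Tx0].
split=> [T_par|[TF_dim|[u [_ Tu0 TuJ]]] x y Fx Fy].
- have [|TF_dim] := pselect (span_dim1 (T @` F)); [by left | right].
  have TF_par y z : (T @` F) y -> (T @` F) z -> parallel_pair y z.
    by move=> [x Fx <-] [x' Fx' <-]; exact: T_par.
  have [_ [[u Fu <-] Tu0 TuJ]] :=
    convex_parallel_Jset_sub _ Y_dim (convex_linear_image T F_convex) TF_par TF_dim
      (ex_intro2 _ _ _ (imageP T Fx0) Tx0).
  by exists u; split=> // v Fv _; apply/TuJ/imageP.
- exact: parallel_of_span_dim1 TF_dim (imageP T Fx) (imageP T Fy).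
- apply: parallel_of_common_Jset Y_dim Tu0 _ _ _ (imageP T Fx) (imageP T Fy).
  by move=> _ [v Fv <-]; exact: TuJ.
Qed.
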